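(* Let $\mathcal{A}$ be a finite alphabet and let $\Sigma$ be the set of standard pairs on $\mathcal{A}$ whose rows have the form $a\,w_0\,w_1\,w_2\cdots w_{d-1}\,w_d\,w_{d+1}\,z$ (row 0) and $z\,w_0\,w_d\,w_{d-1}\cdots w_2\,w_1\,w_{d+1}\,a$ (row 1) for some $d\ge0$, letters $a,z$, and words $w_0,\dots,w_{d+1}$ where $w_0$ and $w_{d+1}$ may be empty and $w_1,\dots,w_d$ are nonempty (each $w_i$ appearing identically, not reversed, in both rows). Then $\Sigma$ is closed under inner switch moves and outer switch moves (whenever the move is defined). Moreover, if some $\mathbf{p}\in\Sigma$ has a Type, then it is of Type $\langle1\rangle$.
   Context: Let $n=\#\mathcal{A}\ge2$. A pair is $\mathbf{p}=(p_0,p_1)$ with $p_0,p_1:\mathcal{A}\to\{1,\dots,n\}$ bijections, displayed by rows (row $\varepsilon$ lists $p_\varepsilon^{-1}(1),\dots,p_\varepsilon^{-1}(n)$); words are ordered collections of distinct letters. Standard: $p_0^{-1}(1)=p_1^{-1}(n)$ and $p_1^{-1}(1)=p_0^{-1}(n)$. Inner switch: for standard $\mathbf{p}$ with rows $a\,u_1\,b\,u_2\,c\,u_3\,z$ and $z\,u_4\,b\,u_5\,c\,u_6\,a$ (letters $b,c$, possibly empty words $u_i$), the $\{b,c\}$-switch gives rows $a\,u_2\,c\,u_1\,b\,u_3\,z$ and $z\,u_5\,c\,u_4\,b\,u_6\,a$. Outer switches: for standard $\mathbf{p}$ with rows $a\,u_1\,b\,u_2\,z$ and $z\,u_3\,b\,u_4\,a$,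 the $\{a,b\}$-switch gives rows $b\,u_2\,a\,u_1\,z$ and $z\,u_4\,a\,u_3\,b$, and the $\{b,z\}$-switch gives rows $a\,u_2\,z\,u_1\,b$ and $b\,u_4\,z\,u_3\,a$. A standard pair is piece-wise order reversing if there are $2=k_0<\dots<k_\ell=n$ with $B_i=p_0^{-1}\{k_{i-1},\dots,k_i-1\}=p_1^{-1}\{k_{i-1},\dots,k_i-1\}$ and $p_0(b)+p_1(b)=k_{i-1}+k_i-1$ for $b\in B_i$; the $B_i$ are blocks ($k$-block: $k$ letters). Chains: with the $1$-blocks $S_1,\dots,S_{k-1}$ listed left to right, chain $C_i$ is the possibly empty sequence of consecutive blocks strictly between $S_{i-1}$ and $S_i$ ($C_1$ before $S_1$, $C_k$ after $S_{k-1}$). Only piece-wise order reversing pairs have a Type. Types: $\langle1\rangle$: at most one nonempty chain, consisting (if present) of one block. Types $\langle2\rangle$–$\langle5\rangle$ require more than one block of size $\ge2$, and: $\langle2\rangle$: all nonempty chains consist of $2$-blocks; $\langle3\rangle$: each nonempty chain is (i) $m$ $2$-blocks, a $3$-block, $\ell$ $2$-blocks ($m,\ell\ge0$) or (ii) $m\ge1$ $2$-blocks, with at least one chain of form (i); $\langle4\rangle$: exactly one chain is a $4$-block followed by $m\ge0$ $2$-blocks, other nonempty chains consist of $2$-blocks; $\langle5\rangle$: exactly one chain is a single $5$-block, every other nonempty chain is exactly one $2$-block. *)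

From mathcomp Require Import all_boot.
Set Implicit Arguments. Unset Strict Implicit. Unset Printing Implicit Defensive.

(* A pair p = (p0,p1) on the finite alphabet A is represented by its two
   rows: row e lists p_e^{-1}(1), ..., p_e^{-1}(n).  So p_e(b) = index b row_e + 1. *)
Definition pair (A : finType) := (seq A * seq A)%type.

Definition is_pair (A : finType) (p : pair A) : Prop :=
  perm_eq p.1 (enum A) /\ perm_eq p.2 (enum A).

Definition pos (A : finType) (r : seq A) (b : A) : nat := (index b r).+1.

Definition standard (A : finType) (p : pair A) : Prop :=
  is_pair p /\
  exists (a z : A) (u v : seq A), p.1 = a :: rcons u z /\ p.2 = z :: rcons v a.

Definition inner_switch (A : finType) (p q : pair A) : Prop :=
  standard p /\
  exists (a z b c : A) (u1 u2 u3 u4 u5 u6 : seq A),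
    p = (a :: u1 ++ b :: u2 ++ c :: u3 ++ [:: z],
         z :: u4 ++ b :: u5 ++ c :: u6 ++ [:: a]) /\
    q = (a :: u2 ++ c :: u1 ++ b :: u3 ++ [:: z],
         z :: u5 ++ c :: u4 ++ b :: u6 ++ [:: a]).

Definition outer_switch_ab (A : finType) (p q : pair A) : Prop :=
  standard p /\
  exists (a z b : A) (u1 u2 u3 u4 : seq A),
    p = (a :: u1 ++ b :: u2 ++ [:: z], z :: u3 ++ b :: u4 ++ [:: a]) /\
    q = (b :: u2 ++ a :: u1 ++ [:: z], z :: u4 ++ a :: u3 ++ [:: b]).

Definition outer_switch_bz (A : finType) (p q : pair A) : Prop :=
  standard p /\
  exists (a z b : A) (u1 u2 u3 u4 : seq A),
    p = (a :: u1 ++ b :: u2 ++ [:: z], z :: u3 ++ b :: u4 ++ [:: a]) /\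
    q = (a :: u2 ++ z :: u1 ++ [:: b], b :: u4 ++ z :: u3 ++ [:: a]).

(* The set Sigma: rows  a w0 w1 ... wd w_{d+1} z  and  z w0 wd ... w1 w_{d+1} a,
   with w1..wd nonempty (ws = [:: w1; ...; wd], d = size ws >= 0). *)
Definition in_Sigma (A : finType) (p : pair A) : Prop :=
  standard p /\
  exists (a z : A) (w0 wl : seq A) (ws : seq (seq A)),
    all (fun w => w != [::]) ws /\
    p.1 = a :: w0 ++ flatten ws ++ wl ++ [:: z] /\
    p.2 = z :: w0 ++ flatten (rev ws) ++ wl ++ [:: a].

(* Piece-wise order reversing, with block boundaries k = [:: k_0; ...; k_l],
   2 = k_0 < ... < k_l = n.  Block B_i = p_e^{-1}{k_{i-1},...,k_i - 1}. *)
Definition por_decomp (A : finType) (p : pair A) (k : seq nat) : Prop :=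
  standard p /\
  size k > 0 /\ head 0 k = 2 /\ last 0 k = #|A| /\ sorted ltn k /\
  forall i, 0 < i < size k -> forall b : A,
    let lo := nth 0 k i.-1 in let hi := nth 0 k i in
    ((lo <= pos p.1 b < hi) = (lo <= pos p.2 b < hi)) /\
    (lo <= pos p.1 b < hi -> pos p.1 b + pos p.2 b = lo + hi - 1).

Definition piecewise_order_reversing (A : finType) (p : pair A) : Prop :=
  exists k, por_decomp p k.

Definition block_sizes (k : seq nat) : seq nat :=
  [seq nth 0 k i.+1 - nth 0 k i | i <- iota 0 (size k).-1].

(* chains C_1, ..., C_k: maximal (possibly empty) runs of blocks between
   consecutive 1-blocks (C_1 before S_1, C_k after S_{k-1}); represented by
   the sizes of their blocks *)
Definition chains (s : seq nat) : seq (seq nat) :=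
  foldr (fun x acc => if x == 1 then [::] :: acc
                      else (x :: head [::] acc) :: behead acc) [:: [::]] s.

Definition many_big (s : seq nat) : bool := 1 < count (fun x => 2 <= x) s.

Definition all2blocks (c : seq nat) : bool := all (fun x => x == 2) c.

Definition formI (c : seq nat) : bool :=
  [exists m : 'I_(size c).+1, exists l : 'I_(size c).+1,
     c == nseq m 2 ++ 3 :: nseq l 2].
Definition formII (c : seq nat) : bool := (c != [::]) && all2blocks c.
Definition form4 (c : seq nat) : bool :=
  [exists m : 'I_(size c).+1, c == 4 :: nseq m 2].

Definition type1 (s : seq nat) : bool :=
  (count (fun c => c != [::]) (chains s) <= 1) &&
  all (fun c => size c <= 1) (chains s).

Definition type2 (s : seq nat) : bool :=
  many_big s && all (fun c => (c == [::]) || all2blocks c) (chains s).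

Definition type3 (s : seq nat) : bool :=
  [&& many_big s,
      all (fun c => [|| c == [::], formI c | formII c]) (chains s)
    & has formI (chains s)].

Definition type4 (s : seq nat) : bool :=
  [&& many_big s, count form4 (chains s) == 1
    & all (fun c => form4 c || all2blocks c) (chains s)].

Definition type5 (s : seq nat) : bool :=
  [&& many_big s, count (fun c => c == [:: 5]) (chains s) == 1
    & all (fun c => [|| c == [:: 5], c == [::] | c == [:: 2]]) (chains s)].

Definition is_type (t : nat) (s : seq nat) : bool :=
  match t with
  | 1 => type1 s | 2 => type2 s | 3 => type3 s | 4 => type4 s | 5 => type5 s
  | _ => false
  end.

Definition has_type (A : finType) (p : pair A) (t : nat) : Prop :=
  exists k, por_decomp p k /\ is_type t (block_sizes k).

From mathcomp Require Import all_boot zify.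
Set Implicit Arguments. Unset Strict Implicit. Unset Printing Implicit Defensive.

(* Write the rows of a pair of Sigma as [a X z] and [z Y a]: then [Y] arises
   from [X] by reversing the order of consecutive blocks [w1 ... wd] between a
   fixed prefix [w0] and a fixed suffix [w_{d+1}].  A switch move cuts [X] and
   [Y] just after the moved letters and permutes the pieces; according to
   whether these letters lie in the fixed prefix, in a block or in the fixed
   suffix, the new rows are again a block reversal, with explicit new blocks.
   In a block reversal a letter moves only together with its whole block, so a
   letter moving right never precedes, in both rows, a letter moving left.  In a
   piece-wise order reversing pair the first letter of a block of size >= 2
   moves right and its last letter moves left, and the blocks keep their order
   in both rows; so at most one block has size >= 2, which forces Type <1>. *)

Ltac cat_norm :=
  rewrite ?(rev_cat, rev_cons, flatten_cat, flatten_rcons) /=;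
  repeat (rewrite -catA || rewrite cat_cons || rewrite cat0s || rewrite cats0).

Section Pivot.
Variable T : Type.
Implicit Types (s t : seq T) (ws : seq (seq T)).

Lemma flatten_cons w ws : flatten (w :: ws) = w ++ flatten ws.
Proof. by []. Qed.

Lemma pivot_eq_cat s1 s2 t1 t2 b :
  s1 ++ b :: s2 = t1 ++ t2 ->
  (exists m, t1 = s1 ++ b :: m /\ s2 = m ++ t2) \/
  (exists m, s1 = t1 ++ m /\ t2 = m ++ b :: s2).
Proof.
elim: s1 t1 => [|x s1 IH] [|y t1] /=.
- by move=> <-; right; exists [::].
- by case=> -> ->; left; exists t1.
- by move=> <-; right; exists (x :: s1).
- by case=> -> /IH [[m [-> ->]]|[m [-> ->]]]; [left|right]; exists m.
Qed.

Lemma flatten_eq_pivot ws s1 s2 b :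
  flatten ws = s1 ++ b :: s2 ->
  exists ws1 al be ws2, [/\ ws = ws1 ++ (al ++ b :: be) :: ws2,
    s1 = flatten ws1 ++ al & s2 = be ++ flatten ws2].
Proof.
elim: ws s1 => [|w ws IH] s1 /=; first by case: s1.
move/esym/pivot_eq_cat => [[m [-> ->]]|[m [-> /IH]]].
- by exists [::], s1, m, ws.
- move=> [ws1 [al [be [ws2 [-> -> ->]]]]].
  by exists (w :: ws1), al, be, ws2; rewrite /= catA.
Qed.

End Pivot.

Lemma uniq_pivot_inj (T : eqType) (s1 s2 t1 t2 : seq T) b :
  s1 ++ b :: s2 = t1 ++ b :: t2 -> uniq (s1 ++ b :: s2) -> s1 = t1 /\ s2 = t2.
Proof. by move=> E U; move/eqP: E; rewrite uniq_eqseq_pivotl // => /andP[/eqP-> /eqP->]. Qed.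

Lemma uniq_pivot2_inj (T : eqType) (s1 s2 s3 t1 t2 t3 : seq T) b c :
  s1 ++ b :: s2 ++ c :: s3 = t1 ++ b :: t2 ++ c :: t3 ->
  uniq (s1 ++ b :: s2 ++ c :: s3) -> [/\ s1 = t1, s2 = t2 & s3 = t3].
Proof.
move=> E U; have [-> E'] := uniq_pivot_inj E U.
move: U; rewrite cat_uniq => /and3P[_ _ /andP[_ /(uniq_pivot_inj E')[-> ->]]].
by [].
Qed.

Lemma uniq_pivot2_order (T : eqType) (s1 s2 s3 t1 t2 t3 : seq T) b c :
  s1 ++ b :: s2 ++ c :: s3 = t1 ++ c :: t2 ++ b :: t3 ->
  ~~ uniq (s1 ++ b :: s2 ++ c :: s3).
Proof.
move=> E; apply/negP => U.
have /uniq_pivot_inj/(_ U)[Es1 _] : s1 ++ b :: s2 ++ c :: s3 = (t1 ++ c :: t2) ++ b :: t3.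
  by rewrite E -catA.
move: U; rewrite cat_uniq Es1 => /and3P[_ /negP nU _]; apply: nU; apply/hasP; exists c.
  by rewrite !(inE, mem_cat) eqxx !orbT.
by rewrite !(inE, mem_cat) eqxx !orbT.
Qed.

(* Empty blocks are allowed: they do not change the relation (see [in_SigmaP]). *)
Definition block_reversal (T : Type) (X Y : seq T) : Prop :=
  exists w0 wl (ws : seq (seq T)),
    X = w0 ++ flatten ws ++ wl /\ Y = w0 ++ flatten (rev ws) ++ wl.

Section BlockReversal.
Variable T : eqType.
Implicit Types (s X Y : seq T) (ws : seq (seq T)).

Lemma block_split_pivot w0 wl ws s1 s2 b :
  w0 ++ flatten ws ++ wl = s1 ++ b :: s2 ->
  [\/ exists l, w0 = s1 ++ b :: l /\ s2 = l ++ flatten ws ++ wl,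
      exists ws1 al be ws2, [/\ ws = ws1 ++ (al ++ b :: be) :: ws2,
        s1 = w0 ++ flatten ws1 ++ al & s2 = be ++ flatten ws2 ++ wl]
    | exists l, wl = l ++ b :: s2 /\ s1 = w0 ++ flatten ws ++ l].
Proof.
move=> /esym E; case: (pivot_eq_cat E) => [[l [-> ->]]|[m [-> /esym E2]]].
  by constructor 1; exists l.
case: (pivot_eq_cat E2) => [[l [Ef ->]]|[l [-> ->]]].
  have [ws1 [al [be [ws2 [-> -> ->]]]]] := flatten_eq_pivot Ef.
  by constructor 2; exists ws1, al, be, ws2; split; cat_norm.
by constructor 3; exists l.
Qed.

Lemma block_reversal_rotate X Y u1 u2 u3 u4 b e :
  block_reversal X Y -> X = u1 ++ b :: u2 -> Y = u3 ++ b :: u4 -> uniq Y ->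
  block_reversal (u2 ++ e :: u1) (u4 ++ e :: u3).
Proof.
move=> [w0 [wl [ws [-> ->]]]] + EY UY; rewrite EY in UY => /block_split_pivot[].
- move=> [l [Ew0 ->]]; subst w0.
  have /uniq_pivot_inj/(_ UY)[-> ->] :
    u3 ++ b :: u4 = u1 ++ b :: (l ++ flatten (rev ws) ++ wl) by rewrite -EY; cat_norm.
  by exists l, (wl ++ e :: u1), ws; split; cat_norm.
- move=> [ws1 [al [be [ws2 [Ews -> ->]]]]]; subst ws.
  have /uniq_pivot_inj/(_ UY)[-> ->] : u3 ++ b :: u4 =
    (w0 ++ flatten (rev ws2) ++ al) ++ b :: (be ++ flatten (rev ws1) ++ wl).
    by rewrite -EY; cat_norm.
  by exists be, al, (ws2 ++ (wl ++ e :: w0) :: ws1); split; cat_norm.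
- move=> [l [Ewl ->]]; subst wl.
  have /uniq_pivot_inj/(_ UY)[-> ->] :
    u3 ++ b :: u4 = (w0 ++ flatten (rev ws) ++ l) ++ b :: u2 by rewrite -EY; cat_norm.
  by exists (u2 ++ e :: w0), l, ws; split; cat_norm.
Qed.

Lemma block_reversal_insert X Y s1 s2 t1 t2 m c :
  block_reversal X Y -> X = s1 ++ c :: s2 -> Y = t1 ++ c :: t2 -> uniq Y ->
  block_reversal (s1 ++ c :: m ++ s2) (t1 ++ c :: m ++ t2).
Proof.
move=> [w0 [wl [ws [-> ->]]]] + EY UY; rewrite EY in UY => /block_split_pivot[].
- move=> [l [Ew0 ->]]; subst w0.
  have /uniq_pivot_inj/(_ UY)[-> ->] :
    t1 ++ c :: t2 = s1 ++ c :: (l ++ flatten (rev ws) ++ wl) by rewrite -EY; cat_norm.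
  by exists (s1 ++ c :: m ++ l), wl, ws; split; cat_norm.
- move=> [ws1 [al [be [ws2 [Ews -> ->]]]]]; subst ws.
  have /uniq_pivot_inj/(_ UY)[-> ->] : t1 ++ c :: t2 =
    (w0 ++ flatten (rev ws2) ++ al) ++ c :: (be ++ flatten (rev ws1) ++ wl).
    by rewrite -EY; cat_norm.
  by exists w0, wl, (ws1 ++ (al ++ c :: m ++ be) :: ws2); split; cat_norm.
- move=> [l [Ewl ->]]; subst wl.
  have /uniq_pivot_inj/(_ UY)[-> ->] :
    t1 ++ c :: t2 = (w0 ++ flatten (rev ws) ++ l) ++ c :: s2 by rewrite -EY; cat_norm.
  by exists w0, (l ++ c :: m ++ s2), ws; split; cat_norm.
Qed.

Lemma block_reversal_switch X Y u1 u2 u3 u4 u5 u6 b c :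
  block_reversal X Y -> X = u1 ++ b :: u2 ++ c :: u3 ->
  Y = u4 ++ b :: u5 ++ c :: u6 -> uniq Y ->
  block_reversal (u2 ++ c :: u1 ++ b :: u3) (u5 ++ c :: u4 ++ b :: u6).
Proof.
move=> [w0 [wl [ws [-> ->]]]] + EY UY; rewrite EY in UY => /block_split_pivot[].
- move=> [l [Ew0 EX]]; subst w0.
  have /uniq_pivot_inj/(_ UY)[-> EY'] :
    u4 ++ b :: u5 ++ c :: u6 = u1 ++ b :: (l ++ flatten (rev ws) ++ wl).
    by rewrite -EY; cat_norm.
  have := block_reversal_insert (u1 ++ [:: b]) _ (esym EX) (esym EY').
  rewrite -!catA; apply; first by exists l, wl, ws.
  by move: UY; rewrite cat_uniq EY' => /and3P[_ _ /andP[]].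
- move=> [ws1 [al [be [ws2 [Ews -> EX]]]]]; subst ws.
  move: EX => /esym/block_split_pivot[].
  + move=> [l [Ebe ->]]; subst be.
    have /uniq_pivot2_inj/(_ UY)[-> -> ->] : u4 ++ b :: u5 ++ c :: u6 =
      (w0 ++ flatten (rev ws2) ++ al) ++ b :: u2 ++ c :: (l ++ flatten (rev ws1) ++ wl).
      by rewrite -EY; cat_norm.
    by exists (u2 ++ c :: w0), wl, (ws1 ++ (al ++ b :: l) :: ws2); split; cat_norm.
  + move=> [vs1 [ga [de [vs2 [Ews2 -> ->]]]]]; subst ws2.
    have : u4 ++ b :: u5 ++ c :: u6 = (w0 ++ flatten (rev vs2) ++ ga) ++ c ::
      (de ++ flatten (rev vs1) ++ al) ++ b :: (be ++ flatten (rev ws1) ++ wl).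
      by rewrite -EY; cat_norm.
    by move/uniq_pivot2_order; rewrite UY.
  + move=> [l [Ewl ->]]; subst wl.
    have /uniq_pivot2_inj/(_ UY)[-> -> ->] : u4 ++ b :: u5 ++ c :: u6 =
      (w0 ++ flatten (rev ws2) ++ al) ++ b :: (be ++ flatten (rev ws1) ++ l) ++ c :: u3.
      by rewrite -EY; cat_norm.
    by exists be, (al ++ b :: u3), (ws2 ++ (l ++ c :: w0) :: ws1); split; cat_norm.
- move=> [l [Ewl ->]]; subst wl.
  have /uniq_pivot2_inj/(_ UY)[-> -> ->] : u4 ++ b :: u5 ++ c :: u6 =
    (w0 ++ flatten (rev ws) ++ l) ++ b :: u2 ++ c :: u3 by rewrite -EY; cat_norm.
  by exists (u2 ++ c :: w0), (l ++ b :: u3), ws; split; cat_norm.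
Qed.

Lemma size_flatten_rev ws : size (flatten (rev ws)) = size (flatten ws).
Proof. by rewrite !size_flatten /shape map_rev sumn_rev. Qed.

Lemma index_uniq_pivot s1 s2 b : uniq (s1 ++ b :: s2) -> index b (s1 ++ b :: s2) = size s1.
Proof. by rewrite uniq_catC /= mem_cat => /andP[/norP[_ ?] _]; rewrite index_pivot. Qed.

Lemma block_reversal_index w0 wl ws b :
  uniq (w0 ++ flatten ws ++ wl) -> uniq (w0 ++ flatten (rev ws) ++ wl) ->
  b \in w0 ++ flatten ws ++ wl ->
  index b (w0 ++ flatten ws ++ wl) = index b (w0 ++ flatten (rev ws) ++ wl) \/
  exists ws1 al be ws2, [/\ ws = ws1 ++ (al ++ b :: be) :: ws2,
    index b (w0 ++ flatten ws ++ wl) = size (w0 ++ flatten ws1 ++ al) &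
    index b (w0 ++ flatten (rev ws) ++ wl) = size (w0 ++ flatten (rev ws2) ++ al)].
Proof.
move=> + + bX; have [s1 [s2 /block_split_pivot[]]] :
  exists s1 s2, w0 ++ flatten ws ++ wl = s1 ++ b :: s2.
  by case/splitPr: bX => s1 s2; exists s1, s2.
- move=> [l [-> _]]; rewrite -!catA /= => UX UY.
  by left; rewrite !index_uniq_pivot.
- move=> [ws1 [al [be [ws2 [-> _ _]]]]].
  rewrite (_ : w0 ++ _ ++ wl = (w0 ++ flatten ws1 ++ al) ++ b :: (be ++ flatten ws2 ++ wl));
    last by cat_norm.
  rewrite (_ : w0 ++ _ ++ wl =
    (w0 ++ flatten (rev ws2) ++ al) ++ b :: (be ++ flatten (rev ws1) ++ wl)); last by cat_norm.
  move=> UX UY; right; exists ws1, al, be, ws2.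
  by split; rewrite ?index_uniq_pivot.
- move=> [l [-> _]]; rewrite !catA => UX UY; left.
  by rewrite !index_uniq_pivot // !size_cat size_flatten_rev.
Qed.

Lemma block_reversal_no_crossing X Y b c :
  block_reversal X Y -> uniq X -> uniq Y -> b \in X -> c \in X ->
  index b X < index b Y -> index c Y < index c X ->
  index b X < index c X -> index b Y < index c Y -> False.
Proof.
move=> [w0 [wl [ws [-> ->]]]] UX UY bX cX.
have [-> | [ws1 [al [be [ws2 [Eb -> ->]]]]]] := block_reversal_index UX UY bX.
  by rewrite ltnn.
have [-> | [vs1 [ga [de [vs2 [Ec -> ->]]]]]] := block_reversal_index UX UY cX.
  by rewrite ltnn.
rewrite Eb in Ec.
case: (pivot_eq_cat Ec) => [[m [-> ->]] | [[|w m] [-> /= [Ew ->]]]].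
- by rewrite !(size_cat, size_flatten_rev, flatten_cat, flatten_cons); lia.
- by rewrite cats0 !size_cat; lia.
- by rewrite -Ew !(size_cat, size_flatten_rev, flatten_cat, flatten_cons); lia.
Qed.

End BlockReversal.

Lemma count_iota_gt1 (P : pred nat) m : 1 < count P (iota 0 m) ->
  exists i j, [/\ i < j < m, P i & P j].
Proof.
elim: m => [//|m IH]; rewrite -[m.+1]addn1 iotaD count_cat /= addn0 add0n.
case Pm: (P m) => /=.
- rewrite addn1 ltnS -has_count => /hasP[i]; rewrite mem_iota => /andP[_ im] Pi.
  by exists i, m; rewrite im addn1 ltnSn.
- by rewrite addn0 => /IH[i [j [/andP[ij jm] Pi Pj]]]; exists i, j; rewrite ij addn1 ltnW.
Qed.

Lemma chains_cons x s : chains (x :: s) =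
  if x == 1 then [::] :: chains s else (x :: head [::] (chains s)) :: behead (chains s).
Proof. by []. Qed.

Lemma chains_ones s : count (predC1 1) s = 0 -> chains s = nseq (size s).+1 [::].
Proof.
elim: s => [//|x s IH]; rewrite chains_cons /=.
by case: eqVneq => [_ /IH -> | //].
Qed.

Lemma type1_count s : count (predC1 1) s <= 1 -> type1 s.
Proof.
elim: s => [//|x s IH]; rewrite /type1 chains_cons /=.
case: eqVneq => [_ /IH /andP[c1 a1] | _]; first by rewrite /= c1 a1.
rewrite add1n ltnS leqn0 => /eqP/chains_ones ->.
by rewrite /= count_nseq all_nseq /= orbT.
Qed.

Section Sigma.
Variable A : finType.
Implicit Types (p q : pair A) (X Y : seq A).

Lemma flatten_filter_nonnil (ws : seq (seq A)) :
  flatten [seq w <- ws | w != [::]] = flatten ws.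
Proof. by elim: ws => //= -[|x w] ws /= ->. Qed.

Lemma in_SigmaP p : in_Sigma p <-> standard p /\
  exists a z X Y, p = (a :: X ++ [:: z], z :: Y ++ [:: a]) /\ block_reversal X Y.
Proof.
split.
- move=> [Hp [a [z [w0 [wl [ws [_ [E1 E2]]]]]]]]; split=> //.
  exists a, z, (w0 ++ flatten ws ++ wl), (w0 ++ flatten (rev ws) ++ wl).
  split; last by exists w0, wl, ws.
  by case: p E1 E2 {Hp} => p1 p2 /= -> ->; rewrite -!catA.
- move=> [Hp [a [z [X [Y [Ep [w0 [wl [ws [EX EY]]]]]]]]]]; split=> //.
  exists a, z, w0, wl, [seq w <- ws | w != [::]].
  by rewrite filter_all -filter_rev !flatten_filter_nonnil Ep EX EY -!catA.
Qed.

Lemma standard_uniq_inner p a z X Y :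
  standard p -> p = (a :: X ++ [:: z], z :: Y ++ [:: a]) -> uniq X /\ uniq Y.
Proof.
move=> [[P1 P2] _] Ep; move: (perm_uniq P1) (perm_uniq P2).
rewrite !enum_uniq Ep /= !cat_uniq => /andP[_ /and3P[? _ _]] /andP[_ /and3P[? _ _]].
by [].
Qed.

Lemma rows_inj a z a' z' X Y X' Y' :
  (a :: X ++ [:: z], z :: Y ++ [:: a]) = (a' :: X' ++ [:: z'], z' :: Y' ++ [:: a']) ->
  X = X' /\ Y = Y'.
Proof. by rewrite !cats1 => -[_ /rcons_inj[-> _] _ /rcons_inj[-> _]]. Qed.

Lemma in_Sigma_rearrange p q a z X Y a' z' X' Y' :
  in_Sigma p -> p = (a :: X ++ [:: z], z :: Y ++ [:: a]) ->
  q = (a' :: X' ++ [:: z'], z' :: Y' ++ [:: a']) ->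
  perm_eq q.1 p.1 -> perm_eq q.2 p.2 ->
  (block_reversal X Y -> uniq Y -> block_reversal X' Y') -> in_Sigma q.
Proof.
move=> /in_SigmaP[Hp [a0 [z0 [X0 [Y0 [Ep0 BR]]]]]] Ep Eq Q1 Q2 HXY.
have [_ UY] := standard_uniq_inner Hp Ep.
have [EX EY] := rows_inj (etrans (esym Ep) Ep0); subst X0 Y0.
apply/in_SigmaP; split; last by exists a', z', X', Y'; split=> //; apply: HXY.
case: Hp => [[P1 P2] _]; split; first by split; [apply: perm_trans Q1 P1 | apply: perm_trans Q2 P2].
by exists a', z', X', Y'; rewrite Eq !cats1.
Qed.

Ltac perm_by_count := apply/permP => f /=; repeat (rewrite count_cat /=); lia.

Lemma in_Sigma_inner_switch p q : in_Sigma p -> inner_switch p q -> in_Sigma q.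
Proof.
move=> Sp [_ [a [z [b [c [u1 [u2 [u3 [u4 [u5 [u6 [Ep Eq]]]]]]]]]]]].
apply: (in_Sigma_rearrange (a := a) (z := z) (a' := a) (z' := z)
  (X := u1 ++ b :: u2 ++ c :: u3) (Y := u4 ++ b :: u5 ++ c :: u6)
  (X' := u2 ++ c :: u1 ++ b :: u3) (Y' := u5 ++ c :: u4 ++ b :: u6) Sp).
- by rewrite Ep; cat_norm.
- by rewrite Eq; cat_norm.
- by rewrite Eq Ep; perm_by_count.
- by rewrite Eq Ep; perm_by_count.
- by move=> BR UY; apply: block_reversal_switch BR _ _ UY.
Qed.

Lemma in_Sigma_outer_switch_ab p q : in_Sigma p -> outer_switch_ab p q -> in_Sigma q.
Proof.
move=> Sp [_ [a [z [b [u1 [u2 [u3 [u4 [Ep Eq]]]]]]]]].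
apply: (in_Sigma_rearrange (a := a) (z := z) (a' := b) (z' := z)
  (X := u1 ++ b :: u2) (Y := u3 ++ b :: u4)
  (X' := u2 ++ a :: u1) (Y' := u4 ++ a :: u3) Sp).
- by rewrite Ep; cat_norm.
- by rewrite Eq; cat_norm.
- by rewrite Eq Ep; perm_by_count.
- by rewrite Eq Ep; perm_by_count.
- by move=> BR UY; apply: block_reversal_rotate BR _ _ UY.
Qed.

Lemma in_Sigma_outer_switch_bz p q : in_Sigma p -> outer_switch_bz p q -> in_Sigma q.
Proof.
move=> Sp [_ [a [z [b [u1 [u2 [u3 [u4 [Ep Eq]]]]]]]]].
apply: (in_Sigma_rearrange (a := a) (z := z) (a' := a) (z' := b)
  (X := u1 ++ b :: u2) (Y := u3 ++ b :: u4)
  (X' := u2 ++ z :: u1) (Y' := u4 ++ z :: u3) Sp).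
- by rewrite Ep; cat_norm.
- by rewrite Eq; cat_norm.
- by rewrite Eq Ep; perm_by_count.
- by rewrite Eq Ep; perm_by_count.
- by move=> BR UY; apply: block_reversal_rotate BR _ _ UY.
Qed.

Lemma index_rows_interior p a z X Y x :
  standard p -> p = (a :: X ++ [:: z], z :: Y ++ [:: a]) ->
  0 < index x p.1 -> 0 < index x p.2 ->
  [/\ x \in X, index x p.1 = (index x X).+1 & index x p.2 = (index x Y).+1].
Proof.
move=> [[P1 P2] _] Ep; move: (perm_mem P1 x) (perm_mem P2 x).
rewrite Ep mem_enum /= !inE !mem_cat !inE.
case: eqVneq => [//|ax]; case: eqVneq => [//|zx] /=.
rewrite !orbF => xX xY _ _.
by rewrite !index_cat xX xY.
Qed.

Lemma in_Sigma_no_crossing p b c :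
  in_Sigma p -> 0 < index b p.1 ->
  index b p.1 < index b p.2 -> index c p.2 < index c p.1 ->
  index b p.1 < index c p.1 -> index b p.2 < index c p.2 -> False.
Proof.
move=> /in_SigmaP[Hp [a [z [X [Y [Ep BR]]]]]] b1 h1 h2 h3 h4.
have [UX UY] := standard_uniq_inner Hp Ep.
have [bX Eb1 Eb2] := index_rows_interior Hp Ep b1 (leq_ltn_trans (leq0n _) h1).
have [cX Ec1 Ec2] := index_rows_interior Hp Ep (leq_ltn_trans (leq0n _) h2)
  (leq_ltn_trans (leq0n _) h4).
move: h1 h2 h3 h4; rewrite Eb1 Eb2 Ec1 Ec2 !ltnS.
exact: block_reversal_no_crossing BR UX UY bX cX.
Qed.

Lemma exists_pos (r : seq A) m : uniq r -> 0 < m <= size r -> exists x, pos r x = m.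
Proof.
case: r => [|x0 r] U /andP[m0 mr]; first by case: m m0 mr.
by exists (nth x0 (x0 :: r) m.-1); rewrite /pos index_uniq // prednK // -ltnS prednK.
Qed.

Lemma in_Sigma_por_count p k :
  in_Sigma p -> por_decomp p k -> count (predC1 1) (block_sizes k) <= 1.
Proof.
move=> Sp [[[P1 _] _] [_ [k0 [kn [ksort Hk]]]]].
rewrite leqNgt; apply/negP; rewrite /block_sizes count_map.
move=> /count_iota_gt1[i [j [/andP[ij jk] /= bi bj]]].
have ltk := sorted_ltn_nth ltn_trans 0 ksort.
have lek := sorted_leq_nth leq_trans leqnn 0 (sub_sorted (@ltnW) ksort).
have k2 : 2 <= nth 0 k i by rewrite -k0 -nth0; apply: lek; rewrite ?inE /=; lia.
have kn' : nth 0 k j.+1 <= #|A| by rewrite -kn -nth_last; apply: lek; rewrite ?inE /=; lia.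
have kii : nth 0 k i < nth 0 k i.+1 by apply: ltk; rewrite ?inE /=; lia.
have kij : nth 0 k i.+1 <= nth 0 k j by apply: lek; rewrite ?inE /=; lia.
have kjj : nth 0 k j < nth 0 k j.+1 by apply: ltk; rewrite ?inE /=; lia.
have U1 : uniq p.1 by rewrite (perm_uniq P1) enum_uniq.
have sz1 : size p.1 = #|A| by rewrite (perm_size P1) cardE.
have [b pb] : exists b, pos p.1 b = nth 0 k i by apply: exists_pos; rewrite ?sz1; lia.
have [c pc] : exists c, pos p.1 c = (nth 0 k j.+1).-1 by apply: exists_pos; rewrite ?sz1; lia.
have Sb : pos p.1 b + pos p.2 b = nth 0 k i + nth 0 k i.+1 - 1.
  by have [_ /=] := Hk i.+1 ltac:(lia) b; apply; rewrite pb; lia.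
have Sc : pos p.1 c + pos p.2 c = nth 0 k j + nth 0 k j.+1 - 1.
  by have [_ /=] := Hk j.+1 ltac:(lia) c; apply; rewrite pc; lia.
move: pb pc Sb Sc; rewrite /pos => pb pc Sb Sc.
apply: (in_Sigma_no_crossing (b := b) (c := c) Sp); lia.
Qed.

End Sigma.

Theorem lemma4p8 (A : finType) (hA : 1 < #|A|) :
  (forall p q : pair A, in_Sigma p -> inner_switch p q -> in_Sigma q) /\
  (forall p q : pair A, in_Sigma p -> outer_switch_ab p q -> in_Sigma q) /\
  (forall p q : pair A, in_Sigma p -> outer_switch_bz p q -> in_Sigma q) /\
  (forall p : pair A, in_Sigma p -> (exists t, has_type p t) -> has_type p 1).
Proof.
split; first exact: in_Sigma_inner_switch.
split; first exact: in_Sigma_outer_switch_ab.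
split; first exact: in_Sigma_outer_switch_bz.
move=> p Sp [_ [k [Pk _]]]; exists k; split=> //.
exact/type1_count/(in_Sigma_por_count Sp Pk).
Qed.
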